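(* Fix positive integers $n_x$ and $N_h$, a scalar $\eta>0$, and matrices $A_j, B, C, C_J, L, \Delta A\in\mathbb{R}^{n_x\times n_x}$ with $B$, $C$ and $C_J$ invertible. Define, for $K\in\mathbb{R}^{n_x\times n_x}$, $$\bar q(K,\delta_j)\triangleq \eta\|K\|_F^2+\sum_{i=2}^{n_xN_h}\sigma_i(\kappa^{-1}),\qquad \kappa=F_p(K,\delta_j)F_r(K,\delta_j)^{-1},$$ with $F_p$ and $F_r$ as in the context. Then the function $K\mapsto\bar q(K,\delta_j)$ is strongly convex on $\mathbb{R}^{n_x\times n_x}$.
   Context: Here $\delta_j$ labels one fixed realization of a parametric uncertainty. $A_j$ is the plant system matrix under $\delta_j$, $B$ the input matrix, $C$ the measurement matrix, $C_J$ the performance output matrix, $L$ an observer gain, and $\Delta A$ a given matrix (the uncertainty perturbation of the system matrix). Set $A_{x,j}\triangleq A_j+BKC$ and $A_{e,j}\triangleq A_j-LC$. For $\upsilon\in\{x,e\}$, $F_{\upsilon a}\in\mathbb{R}^{n_xN_h\times n_xN_h}$ is the block lower-triangular matrix whose $(k,l)$ block ($k,l=1,\dots,N_h$, blocks of size $n_x\times n_x$) is $A_{\upsilon,j}^{k-l}B$ for $k\ge l$ and $0$ for $k<l$. Thus $F_{xa}=F_{xa}(K,\delta_j)$ depends on $K$, while $F_{ea}(\delta_j)$ does not. $F_{ex}(\delta_j)$ is the strictly block lower-triangular matrix whose $(k,l)$ block is $A_{e,j}^{k-l-1}\Delta A$ for $k>l$ and $0$ otherwise. Define $$F_p(K,\delta_j)=(I_{N_h}\otimes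 C_J)F_{xa}(K,\delta_j),\qquad F_r(K,\delta_j)=(I_{N_h}\otimes C)\big(F_{ea}(\delta_j)+F_{ex}(\delta_j)F_{xa}(K,\delta_j)\big).$$ $\|K\|_F$ is the Frobenius norm. $\sigma_1(M)\le\dots\le\sigma_{n_xN_h}(M)$ are the singular values of $M$ in nondecreasing order. *)

From HB Require Import structures.
From mathcomp Require Import all_boot all_order all_algebra.
From Stdlib Require Import ClassicalEpsilon.
Set Implicit Arguments. Unset Strict Implicit. Unset Printing Implicit Defensive.
Import Order.TTheory GRing.Theory Num.Theory.
Local Open Scope ring_scope.

Section Defs.
Variable R : rcfType.

Definition bdim (nx Nh : nat) : nat := (\sum_(k < Nh) nx)%N.

Definition blkmx (nx Nh : nat) (F : 'I_Nh -> 'I_Nh -> 'M[R]_nx) : 'M[R]_(bdim nx Nh) :=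
  @mxblock R Nh Nh (fun _ => nx) (fun _ => nx) F.

Definition kronI (nx Nh : nat) (M : 'M[R]_nx) : 'M[R]_(bdim nx Nh) :=
  blkmx (fun k l => if k == l then M else 0).

Definition Ax nx (A B C K : 'M[R]_nx) : 'M[R]_nx := A + B *m K *m C.
Definition Ae nx (A L C : 'M[R]_nx) : 'M[R]_nx := A - L *m C.

Definition Fa nx Nh (M B : 'M[R]_nx) : 'M[R]_(bdim nx Nh) :=
  blkmx (fun k l => if (l <= k)%N then M ^+ (k - l) *m B else 0).

Definition F_xa nx Nh (A B C K : 'M[R]_nx) := Fa Nh (Ax A B C K) B.
Definition F_ea nx Nh (A B C L : 'M[R]_nx) := Fa Nh (Ae A L C) B.

Definition F_ex nx Nh (A C L dA : 'M[R]_nx) : 'M[R]_(bdim nx Nh) :=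
  blkmx (fun k l => if (l < k)%N then (Ae A L C) ^+ (k - l - 1) *m dA else 0).

Definition F_p nx Nh (A B C CJ K : 'M[R]_nx) : 'M[R]_(bdim nx Nh) :=
  kronI Nh CJ *m F_xa Nh A B C K.

Definition F_r nx Nh (A B C L dA K : 'M[R]_nx) : 'M[R]_(bdim nx Nh) :=
  kronI Nh C *m (F_ea Nh A B C L + F_ex Nh A C L dA *m F_xa Nh A B C K).

(* kappa^{-1} = (F_p F_r^{-1})^{-1} = F_r F_p^{-1} *)
Definition kappa_inv nx Nh (A B C CJ L dA K : 'M[R]_nx) : 'M[R]_(bdim nx Nh) :=
  F_r Nh A B C L dA K *m invmx (F_p Nh A B C CJ K).

(* Singular values of M : 'M_n, in nondecreasing order:
   the nonnegative square roots of the eigenvalues (with multiplicity) of M^T M,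
   i.e. the unique sorted seq s of nonnegative reals of size n with
   char_poly (M^T M) = prod_(x <- s) ('X - x^2). *)
Definition is_sing_vals n (M : 'M[R]_n) (s : seq R) : Prop :=
  [/\ size s = n, sorted <=%R s, all (fun x => 0 <= x) s
    & char_poly (M^T *m M) = \prod_(x <- s) ('X - (x ^+ 2)%:P)].

Definition sing_vals n (M : 'M[R]_n) : seq R :=
  epsilon (inhabits [::]) (is_sing_vals M).

(* sigma_(i+1)(M) in the paper's 1-based numbering *)
Definition sigma n (M : 'M[R]_n) (i : nat) : R := nth 0 (sing_vals M) i.

Definition frob m n (M : 'M[R]_(m, n)) : R :=
  Num.sqrt (\sum_(i < m) \sum_(j < n) M i j ^+ 2).

Definition qbar nx Nh (eta : R) (A B C CJ L dA K : 'M[R]_nx) : R :=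
  eta * frob K ^+ 2
  + \sum_(1 <= i < bdim nx Nh) sigma (kappa_inv Nh A B C CJ L dA K) i.

Definition strongly_convex n (f : 'M[R]_n -> R) : Prop :=
  exists m : R, 0 < m /\
    forall (X Y : 'M[R]_n) (t : R), 0 <= t -> t <= 1 ->
      f (t *: X + (1 - t) *: Y)
        <= t * f X + (1 - t) * f Y - m / 2%:R * t * (1 - t) * frob (X - Y) ^+ 2.

End Defs.

(* kappa^-1 = F_r F_p^-1 is an affine function of K.  Indeed F_xa = T(A_x) (I (x) B),
   where T(A) is the block lower-triangular Toeplitz matrix of the powers of A, whose
   inverse I - (I (x) A) S (S the block down-shift) is affine in A; so F_p^-1 is
   affine in K, while F_ex F_xa F_p^-1 = F_ex (I (x) C_J^-1) does not depend on K.
   The sum of all singular values but the smallest is convex (Ky Fan): for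
   M = P diag(s) Q^* it equals Re sum_(j <> j0) (P^* M Q)_jj, j0 indexing the
   smallest singular value, and Re sum_(j <> j0) (U^* M V)_jj <= sum s - min s for
   all partial isometries U, V.  Hence K |-> sum_(i >= 2) sigma_i(kappa^-1) is
   convex, and eta ||K||_F^2 makes the sum strongly convex with modulus 2 eta.
   Singular value decompositions are built over R[i], where the spectral theorem
   for normal matrices is available. *)

From HB Require Import structures.
From mathcomp Require Import all_boot all_order all_algebra.
From mathcomp Require Import spectral complex ring lra.
From Stdlib Require Import ClassicalEpsilon.
Import Order.TTheory GRing.Theory Num.Theory.
Set Implicit Arguments. Unset Strict Implicit. Unset Printing Implicit Defensive.
Local Open Scope ring_scope.

Lemma char_poly_conj (R : comUnitRingType) n (A P Q : 'M[R]_n) :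
  Q *m P = 1%:M -> char_poly (P *m A *m Q) = char_poly A.
Proof.
move=> QP; rewrite /char_poly /char_poly_mx.
set P' := map_mx polyC P; set Q' := map_mx polyC Q.
have PQ' : P' *m Q' = 1%:M by rewrite -map_mxM (mulmx1C QP) map_mx1.
have -> : 'X%:M - map_mx polyC (P *m A *m Q) = P' *m ('X%:M - map_mx polyC A) *m Q'.
  rewrite !map_mxM mulmxBr mulmxBl -/P' -/Q'; congr (_ - _).
  by rewrite scalar_mxC -mulmxA PQ' mulmx1.
by rewrite !det_mulmx mulrC mulrA -det_mulmx (mulmx1C PQ') det1 mul1r.
Qed.

Lemma invf_mul_sqr (F : fieldType) (x : F) : x^-1 * x ^+ 2 = x.
Proof. by have [->|x0] := eqVneq x 0; rewrite ?invr0 ?mul0r // expr2 mulKf. Qed.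

Lemma sum_mul_le_sub_min (R : numDomainType) N (s c : 'I_N -> R) (m : R) :
  0 <= m -> (forall i, m <= s i) -> (forall i, c i <= 1) ->
  \sum_i c i <= N%:R - 1 -> \sum_i s i * c i <= \sum_i s i - m.
Proof.
move=> m0 ms c1 sc; rewrite -subr_ge0.
have -> : \sum_i s i - m - \sum_i s i * c i = \sum_i s i * (1 - c i) - m.
  by under [in RHS]eq_bigr do rewrite mulrBr mulr1; rewrite sumrB; ring.
apply: le_trans (_ : 0 <= \sum_i m * (1 - c i) - m) _.
  by rewrite -mulr_sumr sumrB sumr_const card_ord -[X in _ - X]mulr1 -mulrBr
    mulr_ge0 // subr_ge0 lerBrDl addrC -lerBrDl.
by rewrite lerD2r ler_sum // => i _; rewrite ler_wpM2r ?subr_ge0.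
Qed.

Lemma half_sum_le1 (R : numFieldType) (a b : R) :
  a <= 1 -> b <= 1 -> (a + b) / 2%:R <= 1.
Proof. by move=> a1 b1; rewrite ler_pdivrMr ?ltr0n // mul1r mulr2n lerD. Qed.

Lemma sum_but_const (R : pzRingType) N (j0 : 'I_N) :
  \sum_(j | j != j0) (1 : R) = N%:R - 1.
Proof.
have : \sum_(j < N) (1 : R) = 1 + \sum_(j | j != j0) 1 by rewrite (bigD1 j0).
by rewrite sumr_const card_ord => ->; rewrite addrC addKr.
Qed.

Lemma scale_comb_id (R : pzRingType) (V : lmodType R) (t : R) (v : V) :
  t *: v + (1 - t) *: v = v.
Proof. by rewrite -scalerDl addrC subrK scale1r. Qed.

Lemma mulmx_comb (R : comPzRingType) m n p q (E1 : 'M[R]_(m, n)) (E2 : 'M[R]_(p, q))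
    (E3 : 'M[R]_(m, q)) (W1 W2 : 'M[R]_(n, p)) (t : R) :
  E1 *m (t *: W1 + (1 - t) *: W2) *m E2 + E3
    = t *: (E1 *m W1 *m E2 + E3) + (1 - t) *: (E1 *m W2 *m E2 + E3).
Proof.
rewrite mulmxDr mulmxDl -!scalemxAr -!scalemxAl !scalerDr addrACA.
by rewrite scale_comb_id.
Qed.

Lemma invmx_eq (R : comUnitRingType) n (P V : 'M[R]_n) :
  V *m P = 1%:M -> invmx P = V.
Proof.
move=> VP; have [_ P_unit] := mulmx1_unit VP.
by rewrite -[LHS]mul1mx -VP mulmxK.
Qed.

Section ComplexMatrices.
Variable C : numClosedFieldType.
Local Open Scope sesquilinear_scope.

Lemma ctmx_mul m n p (A : 'M[C]_(m, n)) (B : 'M[C]_(n, p)) :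
  (A *m B)^t* = B^t* *m A^t*.
Proof. by rewrite trmx_mul map_mxM. Qed.

Lemma ctmx_mulE m n (A : 'M[C]_(m, n)) i : (A^t* *m A) i i = \sum_k `|A k i| ^+ 2.
Proof. by rewrite !mxE; apply: eq_bigr => k _; rewrite !mxE normCKC. Qed.

Lemma ctmx_mul_diag_ge0 m n (A : 'M[C]_(m, n)) i : 0 <= (A^t* *m A) i i.
Proof. by rewrite ctmx_mulE sumr_ge0 // => k _; rewrite exprn_ge0. Qed.

Definition partial_isometry m n (W : 'M[C]_(m, n)) := W *m W^t* *m W = W.

Lemma partial_isometry_ct m n (W : 'M[C]_(m, n)) :
  partial_isometry W -> partial_isometry (W^t*).
Proof.
by move=> hW; rewrite /partial_isometry trmxCK -[in RHS]hW !ctmx_mul trmxCK mulmxA.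
Qed.

(* [W W^*] is an orthogonal projection, so [1 - W W^*] is one as well. *)
Lemma bessel_partial_isometry m n p (W : 'M[C]_(m, n)) (X : 'M[C]_(m, p)) i :
  partial_isometry W -> (X^t* *m W *m W^t* *m X) i i <= (X^t* *m X) i i.
Proof.
move=> hW; set P := W *m W^t*.
have P_ct : P^t* = P by rewrite ctmx_mul trmxCK.
have PP : P *m P = P by rewrite mulmxA hW.
have compl : (1%:M - P)^t* *m (1%:M - P) = 1%:M - P.
  have -> : (1%:M - P)^t* = 1%:M - P by rewrite linearB /= map_mxB trmx1 map_mx1 P_ct.
  by rewrite mulmxBl !mulmxBr !mul1mx mulmx1 PP subrr subr0.
rewrite -subr_ge0 -(mulmxA (X^t*)) -/P.
have -> : (X^t* *m X) i i - (X^t* *m P *m X) i i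
    = (((1%:M - P) *m X)^t* *m ((1%:M - P) *m X)) i i.
  rewrite ctmx_mul -mulmxA (mulmxA _ (1%:M - P)) -(mulmxA (X^t*)) compl.
  by rewrite mulmxBr mulmx1 mulmxBl -mulmxA [RHS]mxE [X in _ = _ + X]mxE.
exact: ctmx_mul_diag_ge0.
Qed.

Lemma partial_isometry_diag_le1 m n (W : 'M[C]_(m, n)) j :
  partial_isometry W -> (W *m W^t*) j j <= 1.
Proof.
move=> /(bessel_partial_isometry (1%:M : 'M_m) j).
by rewrite trmx1 map_mx1 !mul1mx mulmx1 [1%:M j j]mxE eqxx.
Qed.

Lemma col_norm_ctmx_mul_le1 m n p (U : 'M[C]_(m, n)) (P : 'M[C]_(m, p)) i :
  partial_isometry U -> partial_isometry P -> \sum_k `|(U^t* *m P) k i| ^+ 2 <= 1.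
Proof.
move=> hU hP; rewrite -ctmx_mulE ctmx_mul trmxCK !mulmxA.
apply: le_trans (bessel_partial_isometry P i hU) _.
by have := partial_isometry_diag_le1 i (partial_isometry_ct hP); rewrite trmxCK.
Qed.

Lemma row_norm_ctmx_mul_le1 m n p (U : 'M[C]_(m, n)) (P : 'M[C]_(m, p)) j :
  partial_isometry U -> partial_isometry P -> \sum_k `|(U^t* *m P) j k| ^+ 2 <= 1.
Proof.
move=> hU hP; rewrite -[U^t* *m P]trmxCK ctmx_mul trmxCK.
under eq_bigr do rewrite 2!mxE norm_conjC.
exact: col_norm_ctmx_mul_le1.
Qed.

Lemma Re_mul_conj_le (a b : C) : 'Re (a * b^*) <= (`|a| ^+ 2 + `|b| ^+ 2) / 2%:R.
Proof.
rewrite ReE !normCK -subr_ge0.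
have -> : (a * a^* + b * b^*) / 2%:R - (a * b^* + (a * b^*)^*) / 2%:R
    = (a - b) * (a - b)^* / 2%:R.
  rewrite rmorphM rmorphB /= conjCK; set ca := a^*; set cb := b^*; ring.
by rewrite divr_ge0 ?mul_conjC_ge0 ?ler0n.
Qed.

(* Each diagonal entry is [\sum_i s_i A_ji (B_ji)^*] with [A = U^* P] and
   [B = V^* Q]; bounding [Re (A_ji (B_ji)^* )] by [(|A_ji|^2 + |B_ji|^2) / 2] puts
   weights at most 1 on the [s_i], of total at most [N - 1], since the rows and
   columns of [A] and [B] have norm at most 1. *)
Lemma ky_fan_le N (U V P Q : 'M[C]_N) (s : 'rV[C]_N) (j0 : 'I_N) (m : C) :
  partial_isometry U -> partial_isometry V ->
  partial_isometry P -> partial_isometry Q ->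
  0 <= m -> (forall i, m <= s 0 i) ->
  'Re (\sum_(j | j != j0) (U^t* *m (P *m diag_mx s *m Q^t*) *m V) j j)
    <= \sum_i s 0 i - m.
Proof.
move=> hU hV hP hQ m0 ms.
set A := U^t* *m P; set B := V^t* *m Q.
pose w j i := (`|A j i| ^+ 2 + `|B j i| ^+ 2) / 2%:R.
have w_ge0 j i : 0 <= w j i by rewrite divr_ge0 ?ler0n ?addr_ge0 ?exprn_ge0.
have s_real i : s 0 i \is Num.real by rewrite ger0_real // (le_trans m0).
have entryE j : (U^t* *m (P *m diag_mx s *m Q^t*) *m V) j j
    = \sum_i s 0 i * (A j i * (B j i)^*).
  have -> : U^t* *m (P *m diag_mx s *m Q^t*) *m V = A *m diag_mx s *m B^t*.
    by rewrite /A /B ctmx_mul trmxCK !mulmxA.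
  rewrite mxE; apply: eq_bigr => i _.
  by rewrite mul_mx_diag !mxE mulrCA mulrA.
apply: le_trans (_ : _ <= \sum_i s 0 i * \sum_(j | j != j0) w j i) _.
  under [X in _ <= X]eq_bigr do rewrite mulr_sumr.
  rewrite raddf_sum [X in _ <= X]exchange_big ler_sum //= => j _.
  rewrite entryE raddf_sum ler_sum // => i _.
  by rewrite /= (ReMl (s_real i)) ler_wpM2l ?(le_trans m0) ?Re_mul_conj_le.
apply: sum_mul_le_sub_min => // [i|].
  apply: le_trans (_ : _ <= \sum_j w j i) _.
    by rewrite [X in _ <= X](bigD1 j0) //= ler_wpDl.
  rewrite -mulr_suml big_split /=.
  by apply: half_sum_le1; apply: col_norm_ctmx_mul_le1.
rewrite exchange_big /= -(sum_but_const _ j0) ler_sum // => j _.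
rewrite -mulr_suml big_split /=.
by apply: half_sum_le1; apply: row_norm_ctmx_mul_le1.
Qed.

Lemma ctmx_diag n (v : 'rV[C]_n) :
  (forall i, v 0 i \is Num.real) -> (diag_mx v)^t* = diag_mx v.
Proof.
move=> v_real; apply/matrixP => i j; rewrite !mxE eq_sym.
by case: eqP => [->|_]; rewrite ?mulr1n ?mulr0n ?conjC0 // conj_Creal.
Qed.

Lemma normalmx_unitary_diag n (S : 'M[C]_n) : S \is normalmx ->
  exists Q (d : 'rV[C]_n),
    [/\ Q^t* *m Q = 1%:M, Q *m Q^t* = 1%:M & S = Q *m diag_mx d *m Q^t*].
Proof.
move=> /orthomx_spectralP eS; exists ((spectralmx S)^t*), (spectral_diag S).
have U := spectral_unitarymx S.
rewrite trmxCK -invmx_unitary //; split => //.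
  by rewrite mulmxV ?spectral_unit.
by rewrite mulVmx ?spectral_unit.
Qed.

Definition is_svd N (X P Q : 'M[C]_N) (s : 'rV[C]_N) : Prop :=
  [/\ partial_isometry P, partial_isometry Q, forall i, 0 <= s 0 i,
      X = P *m diag_mx s *m Q^t* & P^t* *m X *m Q = diag_mx s].

(* With [X^* X = Q diag(s^2) Q^*] and [Y = X Q], the columns of [Y] are orthogonal
   of norms [s]; normalising the nonzero ones gives [P = Y diag(s^-1)]
   (recall [0^-1 = 0]). *)
Lemma svd_exists N (X : 'M[C]_N) : exists P Q (s : 'rV[C]_N),
  is_svd X P Q s /\ char_poly (X^t* *m X) = \prod_i ('X - (s 0 i ^+ 2)%:P).
Proof.
have gram_normal : X^t* *m X \is normalmx.
  by rewrite qualifE ctmx_mul trmxCK.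
have [Q [d [QQ QQ' gramE]]] := normalmx_unitary_diag gram_normal.
set Y := X *m Q.
have YY : Y^t* *m Y = diag_mx d.
  rewrite /Y ctmx_mul -mulmxA (mulmxA (X^t*)) gramE.
  by rewrite !mulmxA QQ mul1mx -mulmxA QQ mulmx1.
have dE i : d 0 i = \sum_k `|Y k i| ^+ 2 by rewrite -ctmx_mulE YY mxE eqxx.
have [s [s_ge0 sK]] : exists s : 'rV[C]_N,
    (forall i, 0 <= s 0 i) /\ (forall i, s 0 i ^+ 2 = d 0 i).
  exists (\row_i sqrtC (d 0 i)); split => i; rewrite mxE ?sqrtCK //.
  by rewrite sqrtC_ge0 dE sumr_ge0 // => k _; rewrite exprn_ge0.
have [t tE] : exists t : 'rV[C]_N, forall i, t 0 i = (s 0 i)^-1.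
  by exists (\row_i (s 0 i)^-1) => i; rewrite mxE.
have t_real i : t 0 i \is Num.real by rewrite tE ger0_real ?invr_ge0.
have Y_col0 k i : s 0 i = 0 -> Y k i = 0.
  move=> /(congr1 (fun x => x ^+ 2)); rewrite sK expr0n dE => /psumr_eq0P.
  move=> /(_ (fun k _ => exprn_ge0 _ (normr_ge0 _)) k isT)/eqP.
  by rewrite sqrf_eq0 normr_eq0 => /eqP.
have [P PE] : {P | P = Y *m diag_mx t} by exists (Y *m diag_mx t).
have Ps : P *m diag_mx s = Y.
  apply/matrixP => k i.
  rewrite PE -mulmxA mulmx_diag mul_mx_diag mxE [X in _ * X]mxE tE.
  by have [/(Y_col0 k) ->|s0] := eqVneq (s 0 i) 0; rewrite ?mul0r // mulVf ?mulr1.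
have PY : P^t* *m Y = diag_mx s.
  rewrite PE ctmx_mul (ctmx_diag t_real) -mulmxA YY mulmx_diag.
  by congr diag_mx; apply/rowP => i; rewrite mxE tE -sK invf_mul_sqr.
exists P, Q, s; split; last first.
  rewrite gramE char_poly_conj // char_poly_trig ?diag_mx_is_trig //.
  by apply: eq_bigr => i _; rewrite mxE eqxx sK.
split => //.
- rewrite /partial_isometry -mulmxA.
  have -> : P^t* *m P = diag_mx (\row_i (s 0 i * t 0 i)).
    by rewrite {2}PE mulmxA PY mulmx_diag.
  rewrite PE -mulmxA mulmx_diag; congr (_ *m diag_mx _); apply/rowP => i.
  by rewrite !mxE tE mulrCA -expr2 -{1}(invrK (s 0 i)) invf_mul_sqr.
- by rewrite /partial_isometry QQ' mul1mx.
- by rewrite Ps /Y -mulmxA QQ' mulmx1.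
- by rewrite -mulmxA PY.
Qed.

Lemma is_svd_Re_sum_but N (X P Q : 'M[C]_N) s (j0 : 'I_N) : is_svd X P Q s ->
  'Re (\sum_(j | j != j0) (P^t* *m X *m Q) j j) = \sum_i s 0 i - s 0 j0.
Proof.
case=> _ _ s_ge0 _ ->.
rewrite raddf_sum [X in _ = X - _](bigD1 j0) //= addrAC subrr add0r.
by apply: eq_bigr => j _; rewrite mxE eqxx mulr1n; apply/Creal_ReP/ger0_real.
Qed.

Lemma sum_but_min_convex N (X1 X2 P Q P1 Q1 P2 Q2 : 'M[C]_N) s s1 s2 j0 m1 m2 t :
  0 <= t <= 1 -> is_svd (t *: X1 + (1 - t) *: X2) P Q s ->
  is_svd X1 P1 Q1 s1 -> 0 <= m1 -> (forall i, m1 <= s1 0 i) ->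
  is_svd X2 P2 Q2 s2 -> 0 <= m2 -> (forall i, m2 <= s2 0 i) ->
  \sum_i s 0 i - s 0 j0
    <= t * (\sum_i s1 0 i - m1) + (1 - t) * (\sum_i s2 0 i - m2).
Proof.
move=> /andP[t_ge0 t_le1] svdX svdX1 m1_ge0 m1_le svdX2 m2_ge0 m2_le.
have [hP hQ _ _ _] := svdX.
have [_ _ _ X1E _] := svdX1; have [_ _ _ X2E _] := svdX2.
rewrite -(is_svd_Re_sum_but j0 svdX) mulmxDr mulmxDl -!scalemxAr -!scalemxAl.
under eq_bigr => j _ do rewrite mxE [_ j j]mxE [X in _ + X]mxE.
rewrite big_split -!mulr_sumr /= raddfD /=.
rewrite !ReMl ?ger0_real ?subr_ge0 //.
rewrite lerD // ler_wpM2l ?subr_ge0 //.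
- by rewrite X1E; apply: ky_fan_le; case: svdX1.
- by rewrite X2E; apply: ky_fan_le; case: svdX2.
Qed.

End ComplexMatrices.

Section SingularValues.
Variable R : rcfType.
Local Notation C := R[i].
Local Notation toC := (real_complex R).
Local Open Scope sesquilinear_scope.

Lemma ctmx_map_toC m n (M : 'M[R]_(m, n)) : (map_mx toC M)^t* = map_mx toC M^T.
Proof. by apply/matrixP => i j; rewrite !mxE conj_Creal // complex_real. Qed.

Lemma is_sing_vals_uniq n (M : 'M[R]_n) s1 s2 :
  is_sing_vals M s1 -> is_sing_vals M s2 -> s1 = s2.
Proof.
move=> [_ sorted1 ge0_1 cp1] [_ sorted2 ge0_2 cp2].
have sqr_perm : perm_eq [seq x ^+ 2 | x <- s1] [seq x ^+ 2 | x <- s2].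
  by apply: prod_XsubC_eq; rewrite !big_map -cp1 -cp2.
have sqrtK (s : seq R) : all (fun x => 0 <= x) s ->
    [seq Num.sqrt y | y <- [seq x ^+ 2 | x <- s]] = s.
  move=> /allP s_ge0; rewrite -map_comp -[RHS]map_id.
  apply/eq_in_map => x /s_ge0 /= x_ge0.
  by rewrite sqrtr_sqr ger0_norm.
apply: le_sorted_eq => //.
by rewrite -(sqrtK _ ge0_1) -(sqrtK _ ge0_2) perm_map.
Qed.

Lemma sing_vals_svd n (M : 'M[R]_n) : exists P Q (r : 'rV[R]_n),
  is_svd (map_mx toC M) P Q (map_mx toC r) /\
  sing_vals M = sort <=%R [seq r 0 i | i <- enum 'I_n].
Proof.
have [P [Q [s [svdM cpM]]]] := svd_exists (map_mx toC M).
pose r := \row_i complex.Re (s 0 i).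
have rE : map_mx toC r = s.
  by case: svdM => _ _ s_ge0 _ _; apply/rowP => i; rewrite !mxE RRe_real ?ger0_real.
exists P, Q, r; rewrite rE; split => //.
set l := [seq r 0 i | i <- enum 'I_n].
have sv_sort : is_sing_vals M (sort <=%R l).
  split.
  - by rewrite size_sort size_map size_enum_ord.
  - exact/sort_sorted/le_total.
  - rewrite all_sort; apply/allP => _ /mapP[i _ ->].
    by case: svdM => _ _ /(_ i); rewrite -rE mxE ler0c.
  - apply: (map_poly_inj toC); rewrite map_char_poly map_mxM -ctmx_map_toC cpM.
    rewrite (perm_big l) ?perm_sort // big_map big_enum /= map_prod_XsubC.
    by apply: eq_bigr => i _; rewrite -rE mxE [in RHS]rmorphXn.
rewrite /sing_vals; apply: (is_sing_vals_uniq _ sv_sort).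
by apply: epsilon_spec; exists (sort <=%R l).
Qed.

Lemma sum_sorted_behead (l : seq R) : sorted <=%R l ->
  [/\ \sum_(1 <= i < size l) nth 0 l i = \sum_(x <- l) x - nth 0 l 0
    & forall x, x \in l -> nth 0 l 0 <= x].
Proof.
case: l => [|x l] sorted_l /=; first by rewrite big_geq // big_nil subrr.
split=> [|y]; last first.
  rewrite inE => /predU1P[-> // | y_l].
  exact: (allP (order_path_min le_trans sorted_l)).
by rewrite big_add1 /= big_cons addrC addKr -(big_nth 0 xpredT id).
Qed.

Lemma sum_sigma_tail_svd n (M : 'M[R]_n) : (0 < n)%N ->
  exists P Q (r : 'rV[R]_n) (j0 : 'I_n),
  [/\ is_svd (map_mx toC M) P Q (map_mx toC r),
      \sum_(1 <= i < n) sigma M i = \sum_i r 0 i - r 0 j0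
    & forall i, r 0 j0 <= r 0 i].
Proof.
move=> n_gt0; have [P [Q [r [svdM svE]]]] := sing_vals_svd M.
set l := [seq r 0 i | i <- enum 'I_n] in svE.
have size_sort_l : size (sort <=%R l) = n by rewrite size_sort size_map size_enum_ord.
have [sumE minP] := sum_sorted_behead (sort_sorted le_total l).
have /mapP[j0 _ j0E] : nth 0 (sort <=%R l) 0 \in l.
  by rewrite -(mem_sort <=%R) mem_nth ?size_sort_l.
exists P, Q, r, j0; split => //.
  have -> : \sum_(1 <= i < n) sigma M i
      = \sum_(1 <= i < size (sort <=%R l)) nth 0 (sort <=%R l) i.
    by rewrite size_sort_l /sigma svE.
  rewrite sumE -j0E; congr (_ - _).
  by rewrite (perm_big l) ?perm_sort // big_map big_enum.
by move=> i; rewrite -j0E minP // mem_sort; apply: map_f; rewrite mem_enum.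
Qed.

Lemma sum_sigma_tail_convex n (M1 M2 : 'M[R]_n) (t : R) : 0 <= t <= 1 ->
  \sum_(1 <= i < n) sigma (t *: M1 + (1 - t) *: M2) i
    <= t * \sum_(1 <= i < n) sigma M1 i + (1 - t) * \sum_(1 <= i < n) sigma M2 i.
Proof.
case: (posnP n) => [n0|n_gt0] t01; first by rewrite !big_geq ?n0 // !mulr0 addr0.
have [P [Q [r [j0 [svdM -> _]]]]] := sum_sigma_tail_svd (t *: M1 + (1 - t) *: M2) n_gt0.
have [P1 [Q1 [r1 [j1 [svdM1 -> min1]]]]] := sum_sigma_tail_svd M1 n_gt0.
have [P2 [Q2 [r2 [j2 [svdM2 -> min2]]]]] := sum_sigma_tail_svd M2 n_gt0.
have sum_toC (v : 'rV[R]_n) : \sum_i (map_mx toC v) 0 i = toC (\sum_i v 0 i).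
  by rewrite rmorph_sum; apply: eq_bigr => i _; rewrite mxE.
have toC_comb (a b c d e : R) : toC (a * (b - c) + (1 - a) * (d - e))
    = toC a * (toC b - toC c) + (1 - toC a) * (toC d - toC e).
  by rewrite !(rmorphD, rmorphM, rmorphB, rmorphN, rmorph1).
have t01C : 0 <= toC t <= 1.
  by case/andP: t01 => t_ge0 t_le1; rewrite ler0c t_ge0 -(rmorph1 toC) lecR.
have combC : map_mx toC (t *: M1 + (1 - t) *: M2)
    = toC t *: map_mx toC M1 + (1 - toC t) *: map_mx toC M2.
  by rewrite map_mxD !map_mxZ rmorphB rmorph1.
rewrite combC in svdM.
have min_toC (v : 'rV[R]_n) j :
    (forall i, v 0 j <= v 0 i) -> forall i, toC (v 0 j) <= (map_mx toC v) 0 i.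
  by move=> v_min i; rewrite mxE lecR.
have min_ge0 X P' Q' (v : 'rV[R]_n) j :
    is_svd X P' Q' (map_mx toC v) -> 0 <= toC (v 0 j).
  by case=> _ _ /(_ j); rewrite mxE.
have := sum_but_min_convex j0 t01C svdM svdM1 (min_ge0 _ _ _ _ j1 svdM1)
  (min_toC _ _ min1) svdM2 (min_ge0 _ _ _ _ j2 svdM2) (min_toC _ _ min2).
by rewrite !sum_toC mxE -lecR toC_comb rmorphB.
Qed.

End SingularValues.

Section BlockToeplitz.
Variables (R : rcfType) (nx Nh : nat).
Local Notation M := 'M[R]_nx.
Local Notation BM := 'M[R]_(bdim nx Nh).
Implicit Types (A B : M) (F G : 'I_Nh -> 'I_Nh -> M).

Lemma mul_blkmx F G :
  blkmx F *m blkmx G = blkmx (fun k l => \sum_j F k j *m G j l).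
Proof. exact: mul_mxblock. Qed.

Lemma kronI_mull A F : kronI Nh A *m blkmx F = blkmx (fun k l => A *m F k l).
Proof.
rewrite mul_blkmx; apply: eq_mxblock => k l.
rewrite (bigD1 k) //= eqxx big1 ?addr0 // => j /negbTE.
by rewrite eq_sym => ->; rewrite mul0mx.
Qed.

Lemma kronI_mulr A F : blkmx F *m kronI Nh A = blkmx (fun k l => F k l *m A).
Proof.
rewrite mul_blkmx; apply: eq_mxblock => k l.
by rewrite (bigD1 l) //= eqxx big1 ?addr0 // => j /negbTE ->; rewrite mulmx0.
Qed.

Lemma kronI_mul A B : kronI Nh A *m kronI Nh B = kronI Nh (A *m B).
Proof.
rewrite [X in X *m _]/kronI kronI_mull; apply: eq_mxblock => k l.
by case: (k == l); rewrite ?mulmx0.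
Qed.

Lemma kronIE A : kronI Nh A = mxdiag (fun _ : 'I_Nh => A).
Proof. by apply: eq_mxblock => k l; case: (k == l); rewrite ?conform_mx_id. Qed.

Lemma kronI_scalar (a : R) : kronI Nh (a%:M : M) = a%:M.
Proof. by rewrite kronIE mxdiagZ. Qed.

Lemma kronI_comb (t : R) A B :
  kronI Nh (t *: A + (1 - t) *: B) = t *: kronI Nh A + (1 - t) *: kronI Nh B.
Proof.
by rewrite !kronIE mxdiagD -!mul_scalar_mx -!kronIE -!kronI_mul !kronI_scalar.
Qed.

Definition pow_toeplitz A : BM :=
  blkmx (fun k l => if (l <= k)%N then A ^+ (k - l) else 0).

Definition blk_shift : BM :=
  blkmx (fun k l => if k == l.+1 :> nat then 1%:M else 0).

Lemma Fa_pow_toeplitz A B : Fa Nh A B = pow_toeplitz A *m kronI Nh B.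
Proof. by rewrite kronI_mulr; apply: eq_mxblock => k l; case: ifP; rewrite ?mul0mx. Qed.

Lemma blk_shift_pow_toeplitz A : blk_shift *m pow_toeplitz A
  = blkmx (fun k l => if (l < k)%N then A ^+ (k - l).-1 else 0).
Proof.
rewrite mul_blkmx; apply: eq_mxblock => k l.
case: (posnP k) => [k0|k_gt0].
  by rewrite k0 big1 // => j _; rewrite mul0mx.
have k1_lt : (k.-1 < Nh)%N by rewrite (leq_ltn_trans (leq_pred k)).
rewrite (bigD1 (Ordinal k1_lt)) //= prednK // eqxx mul1mx big1 ?addr0.
  by rewrite -ltnS prednK //; case: ifP => // _; rewrite -!subn1 subnAC.
move=> j; rewrite -val_eqE /= => j_neq.
case: eqP => [k_eq|_]; last by rewrite mul0mx.
by move: j_neq; rewrite k_eq eqxx.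
Qed.

Lemma shift_inv_mul_pow_toeplitz A :
  (1%:M - kronI Nh A *m blk_shift) *m pow_toeplitz A = 1%:M.
Proof.
have recE : pow_toeplitz A = 1%:M + kronI Nh A *m (blk_shift *m pow_toeplitz A).
  rewrite blk_shift_pow_toeplitz kronI_mull -(kronI_scalar 1) /kronI /blkmx -mxblockD.
  apply: eq_mxblock => k l; case: (ltngtP k l) => [kl|lk|/val_inj ->].
  - by rewrite -val_eqE (ltn_eqF kl) mulmx0 addr0.
  - by rewrite -val_eqE (gtn_eqF lk) add0r mulmxE -exprS prednK // subn_gt0.
  - by rewrite subnn expr0 eqxx mulmx0 addr0.
by rewrite mulmxBl mul1mx {1}recE -mulmxA addrK.
Qed.

Lemma blk_shift_comb (t : R) A1 A2 :
  1%:M - kronI Nh (t *: A1 + (1 - t) *: A2) *m blk_shift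
    = t *: (1%:M - kronI Nh A1 *m blk_shift)
      + (1 - t) *: (1%:M - kronI Nh A2 *m blk_shift).
Proof.
by rewrite kronI_comb mulmxDl -!scalemxAl !scalerBr addrACA -opprD scale_comb_id.
Qed.

Section Kappa.
Variables (A B C CJ L dA : M).
Hypotheses (B_unit : B \in unitmx) (CJ_unit : CJ \in unitmx).

Lemma invmx_F_p K : invmx (F_p Nh A B C CJ K)
  = kronI Nh (invmx B) *m (1%:M - kronI Nh (Ax A B C K) *m blk_shift)
      *m kronI Nh (invmx CJ).
Proof.
apply: invmx_eq; rewrite /F_p /F_xa Fa_pow_toeplitz !mulmxA.
rewrite -(mulmxA _ (kronI Nh (invmx CJ))) kronI_mul mulVmx // kronI_scalar mulmx1.
rewrite -(mulmxA (kronI Nh (invmx B))) shift_inv_mul_pow_toeplitz mulmx1.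
by rewrite kronI_mul mulVmx // kronI_scalar.
Qed.

Lemma F_xa_mul_invmx_F_p K :
  F_xa Nh A B C K *m invmx (F_p Nh A B C CJ K) = kronI Nh (invmx CJ).
Proof.
rewrite invmx_F_p /F_xa Fa_pow_toeplitz !mulmxA -(mulmxA _ (kronI Nh B)) kronI_mul.
rewrite mulmxV // kronI_scalar mulmx1.
by rewrite (mulmx1C (shift_inv_mul_pow_toeplitz _)) mul1mx.
Qed.

Lemma kappa_inv_comb K1 K2 (t : R) :
  kappa_inv Nh A B C CJ L dA (t *: K1 + (1 - t) *: K2)
    = t *: kappa_inv Nh A B C CJ L dA K1 + (1 - t) *: kappa_inv Nh A B C CJ L dA K2.
Proof.
have kappaE K : kappa_inv Nh A B C CJ L dA K
    = kronI Nh C *m F_ea Nh A B C L *m invmx (F_p Nh A B C CJ K)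
      + kronI Nh C *m F_ex Nh A C L dA *m kronI Nh (invmx CJ).
  by rewrite /kappa_inv /F_r mulmxDr mulmxDl -(F_xa_mul_invmx_F_p K) !mulmxA.
have Ax_comb : Ax A B C (t *: K1 + (1 - t) *: K2)
    = t *: Ax A B C K1 + (1 - t) *: Ax A B C K2.
  by rewrite /Ax ![A + _]addrC mulmx_comb.
by rewrite !kappaE !invmx_F_p Ax_comb blk_shift_comb !mulmxA mulmx_comb.
Qed.

End Kappa.

End BlockToeplitz.

Lemma sqr_frob_comb (R : rcfType) m n (X Y : 'M[R]_(m, n)) (t : R) :
  frob (t *: X + (1 - t) *: Y) ^+ 2
    = t * frob X ^+ 2 + (1 - t) * frob Y ^+ 2 - t * (1 - t) * frob (X - Y) ^+ 2.
Proof.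
have frobE (Z : 'M[R]_(m, n)) : frob Z ^+ 2 = \sum_i \sum_j Z i j ^+ 2.
  rewrite sqr_sqrtr // sumr_ge0 // => i _.
  by rewrite sumr_ge0 // => j _; rewrite sqr_ge0.
rewrite !frobE !mulr_sumr -!big_split -sumrB; apply: eq_bigr => i _.
rewrite !mulr_sumr -!big_split -sumrB; apply: eq_bigr => j _.
by rewrite !mxE /=; ring.
Qed.

Lemma convex_add_quadratic_le (R : realFieldType) (eta t fX fY fD gX gY gZ : R) :
  gZ <= t * gX + (1 - t) * gY ->
  eta * (t * fX + (1 - t) * fY - t * (1 - t) * fD) + gZ
    <= t * (eta * fX + gX) + (1 - t) * (eta * fY + gY) - eta * t * (1 - t) * fD.
Proof. lra. Qed.

Theorem theorem2 (R : rcfType) (nx Nh : nat) (eta : R)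
    (Aj B C CJ L dA : 'M[R]_nx) :
  (0 < nx)%N -> (0 < Nh)%N -> 0 < eta ->
  B \in unitmx -> C \in unitmx -> CJ \in unitmx ->
  strongly_convex (fun K : 'M[R]_nx => qbar Nh eta Aj B C CJ L dA K).
Proof.
move=> _ _ eta_gt0 B_unit _ CJ_unit.
exists (eta * 2%:R); split=> [|X Y t t_ge0 t_le1]; first by rewrite mulr_gt0.
rewrite /qbar kappa_inv_comb // sqr_frob_comb mulfK ?pnatr_eq0 //.
by apply: convex_add_quadratic_le; apply: sum_sigma_tail_convex; rewrite t_ge0.
Qed.
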